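(* Let $A\in\mathbb{R}^{m\times n}$, $y\in\mathbb{R}^m$, $\lambda>0$, and let $x^\star$ be a global minimizer of $\min_{x}\frac{1}{2\lambda}\|Ax-y\|^2+\|Lx\|_{1,2}$. Let $\beta^\star=-\frac1\lambda A^\top(Ax^\star-y)$, let $\widehat{L}=L-P_{T_z}LP_{T_x^\perp}$ be the effective lifting operator associated with $x^\star$, $\widehat{u}_{\min}=\widehat{L}(\widehat{L}^\top\widehat{L})^{-1}\beta^\star$, and let $u^\dagger\in\mathbb{R}^p$ be given by $u^\dagger_{J_t}=(\widehat{u}_{\min})_{J_t}$ if $x^\star_{G_t}=0$ and $u^\dagger_{J_t}=x^\star_{G_t}/\|x^\star_{G_t}\|$ if $x^\star_{G_t}\ne0$. Then for every $t\in\{1,\dots,N\}$, $\|u^\dagger_{J_t}\|\le\|\beta^\star_{G_t}\|/w_t$.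
   Context: Let $n,N\in\mathbb{N}$, let $G_1,\dots,G_N\subseteq\{1,\dots,n\}$ be nonempty groups, possibly overlapping, with $\bigcup_iG_i=\{1,\dots,n\}$, and weights $w_i>0$. $x_G$ is the subvector of $x$ indexed by $G$ (increasing order). Let $p=\sum_i|G_i|$, partition $\{1,\dots,p\}$ into consecutive blocks $J_i=\{\sum_{j<i}|G_j|+1,\dots,\sum_{j\le i}|G_j|\}$, and define $L\in\mathbb{R}^{p\times n}$ by $(Lx)_{J_i}=w_ix_{G_i}$; $\|z\|_{1,2}=\sum_i\|z_{J_i}\|$ (Euclidean), so $\|Lx\|_{1,2}=\sum_iw_i\|x_{G_i}\|$. For $x\in\mathbb{R}^n$: $\mathcal{I}_x=\{t:x_{G_t}\ne0\}$; $\mathcal{E}_x=\{1,\dots,n\}\setminus\bigcup_{t\notin\mathcal{I}_x}G_t$, $T_x=\{x':\mathrm{supp}(x')\subseteq\mathcal{E}_x\}$; $\mathcal{E}_z=\bigcup_{t\in\mathcal{I}_x}J_t$, $T_z=\{z':\mathrm{supp}(z')\subseteq\mathcal{E}_z\}$. $P_T$ is the orthogonal (coordinate) projection onto $T$, $T^\perp$ the orthogonal complement. $\widehat{L}^\top\widehat{L}$ is invertible. *)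

From mathcomp Require Import all_boot all_order all_algebra.
From mathcomp Require Import reals.
Set Implicit Arguments. Unset Strict Implicit. Unset Printing Implicit Defensive.
Import Order.TTheory GRing.Theory Num.Theory.
Local Open Scope ring_scope.

Section GroupLasso.
Variables (R : realType) (n N : nat) (G : 'I_N -> {set 'I_n}) (w : 'I_N -> R).

Definition vnorm k (v : 'cV[R]_k) : R := Num.sqrt (\sum_(i < k) v i 0 ^+ 2).

Definition psize : nat := (\sum_(i < N) #|G i|)%N.

(* selection matrix: (Sel i *m x) = x_{G_i}, entries of G_i in increasing order *)
Definition Sel (i : 'I_N) : 'M[R]_(#|G i|, n) :=
  \matrix_(r < #|G i|, j < n) (j == enum_val r)%:R.

Definition subv (x : 'cV[R]_n) (i : 'I_N) : 'cV[R]_(#|G i|) := Sel i *m x.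

(* The lifting operator L : (Lx)_{J_i} = w_i x_{G_i}; the blocks J_i are consecutive *)
Definition Lop : 'M[R]_(psize, n) := \mxcol_(i < N) (w i *: Sel i).

Definition blockv (z : 'cV[R]_psize) (i : 'I_N) : 'cV[R]_(#|G i|) :=
  @submxcol R N (fun i => #|G i|) 1%N z i.

Definition l12 (z : 'cV[R]_psize) : R := \sum_(i < N) vnorm (blockv z i).

Definition active (x : 'cV[R]_n) (t : 'I_N) : bool := subv x t != 0.

Definition Ex (x : 'cV[R]_n) : {set 'I_n} :=
  [set j | [forall t, ~~ active x t ==> (j \notin G t)]].

(* orthogonal coordinate projections onto T_x, T_x^perp, T_z *)
Definition PTx (x : 'cV[R]_n) : 'M[R]_n := diag_mx (\row_j (j \in Ex x)%:R).
Definition PTxperp (x : 'cV[R]_n) : 'M[R]_n := diag_mx (\row_j (j \notin Ex x)%:R).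
Definition PTz (x : 'cV[R]_n) : 'M[R]_psize :=
  \mxdiag_(i < N) (((active x i)%:R)%:M : 'M[R]_(#|G i|)).

Definition Lhat (x : 'cV[R]_n) : 'M[R]_(psize, n) :=
  Lop - PTz x *m Lop *m PTxperp x.

Definition objective m (A : 'M[R]_(m, n)) (y : 'cV[R]_m) (lam : R) (x : 'cV[R]_n) : R :=
  (2 * lam)^-1 * vnorm (A *m x - y) ^+ 2 + l12 (Lop *m x).

Definition beta m (A : 'M[R]_(m, n)) (y : 'cV[R]_m) (lam : R) (x : 'cV[R]_n) : 'cV[R]_n :=
  - (lam^-1 *: (A^T *m (A *m x - y))).

Definition umin m (A : 'M[R]_(m, n)) (y : 'cV[R]_m) (lam : R) (x : 'cV[R]_n) : 'cV[R]_psize :=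
  Lhat x *m invmx ((Lhat x)^T *m Lhat x) *m beta A y lam x.

Definition udag m (A : 'M[R]_(m, n)) (y : 'cV[R]_m) (lam : R) (x : 'cV[R]_n) : 'cV[R]_psize :=
  \mxcol_(t < N) (if active x t then (vnorm (subv x t))^-1 *: subv x t
                  else blockv (umin A y lam x) t).

End GroupLasso.

Arguments blockv {R n N} G z i.

From mathcomp Require Import all_boot all_order all_algebra.
From mathcomp Require Import reals ring lra.
Set Implicit Arguments. Unset Strict Implicit. Unset Printing Implicit Defensive.
Import Order.TTheory GRing.Theory Num.Theory.
Local Open Scope ring_scope.

(* For an active group t, u^dagger_{J_t} is a unit vector and w_t <= |beta_{G_t}|
   is the first-order optimality condition for shrinking x_{G_t} towards 0:
   replacing x by x - e x|_{G_t} lowers the penalty by at least e w_t |x_{G_t}|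
   and raises the data term by e <beta, x|_{G_t}> + O(e^2); Cauchy-Schwarz ends it.
   For an inactive group t, every index of G_t lies outside E_x.  On those
   columns the blocks of Lhat of active groups vanish, so Lhat^T Lhat acts
   diagonally there with entries at least w_t^2 on G_t.  Hence
   v = (Lhat^T Lhat)^-1 beta satisfies |v_j| <= |beta_j| / w_t^2 on G_t, while the
   J_t-block of Lhat v is w_t v_{G_t}. *)

Section Euclid.
Variable R : realType.

Definition dot k (a b : 'cV[R]_k) : R := \sum_(i < k) a i 0 * b i 0.

Lemma dotZl k c (a b : 'cV[R]_k) : dot (c *: a) b = c * dot a b.
Proof. by rewrite /dot mulr_sumr; apply: eq_bigr => i _; rewrite mxE mulrA. Qed.

Lemma dotNl k (a b : 'cV[R]_k) : dot (- a) b = - dot a b.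
Proof. by rewrite /dot -sumrN; apply: eq_bigr => i _; rewrite mxE mulNr. Qed.

Lemma dot_mulmxr m k (M : 'M[R]_(m, k)) (a : 'cV[R]_m) (b : 'cV[R]_k) :
  dot a (M *m b) = dot (M^T *m a) b.
Proof.
have dotE p (u v : 'cV[R]_p) : dot u v = (u^T *m v) 0 0.
  by rewrite mxE; apply: eq_bigr => i _; rewrite mxE.
by rewrite !dotE trmx_mul trmxK mulmxA.
Qed.

Lemma vnorm_ge0 k (a : 'cV[R]_k) : 0 <= vnorm a.
Proof. exact: sqrtr_ge0. Qed.

Lemma vnorm_sqr k (a : 'cV[R]_k) : vnorm a ^+ 2 = dot a a.
Proof.
rewrite sqr_sqrtr; last by apply: sumr_ge0 => i _; rewrite sqr_ge0.
by apply: eq_bigr => i _; rewrite expr2.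
Qed.

Lemma vnorm_gt0 k (a : 'cV[R]_k) : a != 0 -> 0 < vnorm a.
Proof.
move=> a_neq0; rewrite sqrtr_gt0 lt_def sumr_ge0 ?andbT => [|i _]; last first.
  by rewrite sqr_ge0.
apply: contra a_neq0 => /eqP/psumr_eq0P a_eq0; apply/eqP/matrixP => i j.
rewrite (ord1 j) mxE; apply/eqP; rewrite -sqrf_eq0; apply/eqP.
by apply: a_eq0 => // l _; rewrite sqr_ge0.
Qed.

Lemma vnormZ k c (a : 'cV[R]_k) : vnorm (c *: a) = `|c| * vnorm a.
Proof.
rewrite /vnorm -sqrtr_sqr -sqrtrM ?sqr_ge0 // mulr_sumr.
by congr Num.sqrt; apply: eq_bigr => i _; rewrite mxE exprMn.
Qed.

Lemma vnormZV k (a : 'cV[R]_k) : a != 0 -> vnorm ((vnorm a)^-1 *: a) = 1.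
Proof.
move=> /vnorm_gt0 a_gt0.
by rewrite vnormZ ger0_norm ?invr_ge0 ?ltW // mulVf ?gt_eqF.
Qed.

Lemma ler_vnorm k (a b : 'cV[R]_k) :
  (forall i, `|a i 0| <= `|b i 0|) -> vnorm a <= vnorm b.
Proof.
move=> le_ab; rewrite ler_sqrt; last by apply: sumr_ge0 => i _; rewrite sqr_ge0.
apply: ler_sum => i _; rewrite -(real_normK (num_real (a i 0))).
by rewrite -(real_normK (num_real (b i 0))) ler_sqr ?nnegrE.
Qed.

Lemma vnormBZ_sqr k c (a b : 'cV[R]_k) :
  vnorm (a - c *: b) ^+ 2 = vnorm a ^+ 2 - 2 * c * dot a b + c ^+ 2 * vnorm b ^+ 2.
Proof.
rewrite !vnorm_sqr /dot !mulr_sumr -sumrB -big_split; apply: eq_bigr => i _.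
by rewrite !mxE /=; ring.
Qed.

Lemma dot_le_vnormM k (a b : 'cV[R]_k) : dot a b <= vnorm a * vnorm b.
Proof.
have [->|a_neq0] := eqVneq a 0.
  by rewrite /dot big1 ?mulr_ge0 ?vnorm_ge0 // => i _; rewrite mxE mul0r.
have [->|b_neq0] := eqVneq b 0.
  by rewrite /dot big1 ?mulr_ge0 ?vnorm_ge0 // => i _; rewrite mxE mulr0.
have na_gt0 := vnorm_gt0 a_neq0; have nb_gt0 := vnorm_gt0 b_neq0.
have := sqr_ge0 (vnorm (vnorm b *: a - vnorm a *: b)).
rewrite vnormBZ_sqr dotZl vnormZ ger0_norm ?vnorm_ge0 // => h.
have : 0 <= 2 * (vnorm a * vnorm b) * (vnorm a * vnorm b - dot a b).
  by move: h; congr (_ <= _); ring.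
by rewrite pmulr_rge0 ?mulr_gt0 // subr_ge0.
Qed.

Lemma ler_of_forall_small (a b c : R) :
  (forall e, 0 < e -> e <= 1 -> a <= b + e * c) -> a <= b.
Proof.
move=> le_abc; have [c_le0|c_gt0] := lerP c 0.
  by apply: le_trans (le_abc 1 ltr01 (lexx _)) _; rewrite mul1r gerDl.
apply/ler_addgt0Pr => e e_gt0; set e' := Order.min 1 (e / c).
have e'_gt0 : 0 < e' by rewrite lt_min ltr01 divr_gt0.
have e'_le1 : e' <= 1 by rewrite ge_min lexx.
apply: le_trans (le_abc e' e'_gt0 e'_le1) _; rewrite lerD2l.
by rewrite -ler_pdivlMr // ge_min lexx orbT.
Qed.

End Euclid.

Section Blocks.
Variables (R : realType) (n N : nat) (G : 'I_N -> {set 'I_n}) (w : 'I_N -> R).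

Lemma Sel_mulmxE i (v : 'cV[R]_n) r : (Sel R G i *m v) r 0 = v (enum_val r) 0.
Proof.
rewrite mxE (bigD1 (enum_val r)) //= mxE eqxx mul1r big1 ?addr0 // => j /negbTE j_neq.
by rewrite mxE j_neq mul0r.
Qed.

Lemma trSel_Sel_mulmxE i (v : 'cV[R]_n) j :
  ((Sel R G i)^T *m (Sel R G i *m v)) j 0 = (j \in G i)%:R * v j 0.
Proof.
rewrite mxE (eq_bigr (fun r => (j == enum_val r)%:R * v j 0)); last first.
  by move=> r _; rewrite Sel_mulmxE !mxE; case: eqP => [->|]; rewrite ?mul0r.
rewrite -big_distrl /=; congr (_ * _).
rewrite -(big_enum_val (fun k => (j == k)%:R)) /= big_mkcond /=.
rewrite (bigD1 j) //= eqxx big1 ?addr0 => [|k k_neq_j]; first by case: (j \in G i).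
by rewrite eq_sym (negbTE k_neq_j); case: (k \in G i).
Qed.

Lemma blockv_Lop (v : 'cV[R]_n) i :
  blockv G (Lop G w *m v) i = w i *: (Sel R G i *m v).
Proof. by rewrite /blockv /Lop -submxcol_mul mxcolK scalemxAl. Qed.

Lemma l12_Lop (v : 'cV[R]_n) : (forall i, 0 <= w i) ->
  l12 (Lop G w *m v) = \sum_(i < N) w i * vnorm (Sel R G i *m v).
Proof. by move=> w_ge0; apply: eq_bigr => i _; rewrite blockv_Lop vnormZ ger0_norm. Qed.

Definition maskv (t : 'I_N) (v : 'cV[R]_n) : 'cV[R]_n :=
  \col_j ((j \in G t)%:R * v j 0).

Lemma dot_maskv t (a b : 'cV[R]_n) :
  dot a (maskv t b) = dot (subv G a t) (subv G b t).
Proof.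
transitivity (\sum_(r < #|G t|) a (enum_val r) 0 * b (enum_val r) 0); last first.
  by apply: eq_bigr => r _; rewrite !Sel_mulmxE.
rewrite /dot -(big_enum_val (fun j => a j 0 * b j 0)) [RHS]big_mkcond /=.
by apply: eq_bigr => j _; rewrite mxE; case: (j \in G t); rewrite ?mul1r ?mul0r ?mulr0.
Qed.

Lemma l12_Lop_shrink (x : 'cV[R]_n) t e : (forall i, 0 <= w i) -> 0 <= e <= 1 ->
  l12 (Lop G w *m (x - e *: maskv t x))
    <= l12 (Lop G w *m x) - e * (w t * vnorm (subv G x t)).
Proof.
move=> w_ge0 /andP[e_ge0 e_le1].
have shrinkE j : (x - e *: maskv t x) j 0 = (1 - e * (j \in G t)%:R) * x j 0.
  by rewrite !mxE; ring.
have shrink_le1 j : `|1 - e * (j \in G t)%:R| <= 1.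
  by case: (j \in G t); rewrite ?mulr1 ?mulr0 ?subr0 ?normr1 // ger0_norm ?subr_ge0 ?gerBl.
rewrite !l12_Lop // (bigD1 t) //= [X in _ <= X - _](bigD1 t) //=.
have -> : Sel R G t *m (x - e *: maskv t x) = (1 - e) *: subv G x t.
  by apply/matrixP => r k; rewrite (ord1 k) Sel_mulmxE shrinkE enum_valP mxE Sel_mulmxE mulr1.
rewrite -/(subv G x t) vnormZ ger0_norm ?subr_ge0 //.
have : \sum_(i < N | i != t) w i * vnorm (Sel R G i *m (x - e *: maskv t x))
         <= \sum_(i < N | i != t) w i * vnorm (Sel R G i *m x).
  apply: ler_sum => i _; apply: ler_wpM2l => //; apply: ler_vnorm => r.
  by rewrite !Sel_mulmxE shrinkE normrM ler_piMl.
set s := vnorm (subv G x t); lra.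
Qed.

End Blocks.

Section Optimality.
Variables (R : realType) (n N m : nat) (G : 'I_N -> {set 'I_n}) (w : 'I_N -> R).
Variables (A : 'M[R]_(m, n)) (y : 'cV[R]_m) (lam : R) (x : 'cV[R]_n).
Hypotheses (w_gt0 : forall i, 0 < w i) (lam_gt0 : 0 < lam).
Hypothesis x_opt : forall x', objective G w A y lam x <= objective G w A y lam x'.

Lemma data_term_shift (d : 'cV[R]_n) e :
  (2 * lam)^-1 * vnorm (A *m (x - e *: d) - y) ^+ 2
    = (2 * lam)^-1 * vnorm (A *m x - y) ^+ 2 + e * dot (beta A y lam x) d
      + e ^+ 2 * ((2 * lam)^-1 * vnorm (A *m d) ^+ 2).
Proof.
have -> : A *m (x - e *: d) - y = (A *m x - y) - e *: (A *m d).
  by rewrite mulmxBr -scalemxAr addrAC.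
rewrite vnormBZ_sqr dot_mulmxr /beta dotNl dotZl.
by field; rewrite gt_eqF.
Qed.

Lemma optimal_active_group t :
  w t * vnorm (subv G x t) <= dot (subv G (beta A y lam x) t) (subv G x t).
Proof.
rewrite -dot_maskv; set q := (2 * lam)^-1 * vnorm (A *m maskv G t x) ^+ 2.
apply: (@ler_of_forall_small _ _ _ q) => e e_gt0 e_le1.
have := x_opt (x - e *: maskv G t x).
rewrite /objective (data_term_shift (maskv G t x) e).
have w_ge0 i : 0 <= w i by exact: ltW.
have e_01 : 0 <= e <= 1 by rewrite ltW.
have := l12_Lop_shrink G x t w_ge0 e_01.
rewrite -/q => shrink_le opt_le.
have eeq : e * (e * q) = e ^+ 2 * q by rewrite mulrA -expr2.
rewrite -(ler_pM2l e_gt0) mulrDr eeq; lra.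
Qed.

Lemma w_le_vnorm_beta_active t : active G x t -> w t <= vnorm (subv G (beta A y lam x) t).
Proof.
move=> /vnorm_gt0 xt_gt0; rewrite -(ler_pM2r xt_gt0).
exact: le_trans (optimal_active_group t) (dot_le_vnormM _ _).
Qed.

End Optimality.

Section EffectiveLifting.
Variables (R : realType) (n N : nat) (G : 'I_N -> {set 'I_n}) (w : 'I_N -> R).
Variable x : 'cV[R]_n.

Definition Lhat_block i : 'M[R]_(#|G i|, n) := submxcol (Lhat G w x) i.

Lemma Lhat_blockE i : Lhat_block i =
  w i *: Sel R G i - ((active G x i)%:R *: (w i *: Sel R G i)) *m PTxperp G x.
Proof.
rewrite /Lhat_block /Lhat submxcolB /Lop mxcolK -submxcol_mul /PTz.
by rewrite mul_mxdiag_mxcol mxcolK mul_scalar_mx.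
Qed.

Lemma Lhat_block_inactive i : ~~ active G x i -> Lhat_block i = w i *: Sel R G i.
Proof. by move/negbTE=> inact; rewrite Lhat_blockE inact scale0r mul0mx subr0. Qed.

Lemma Lhat_block_active_notin_Ex i r j :
  active G x i -> j \notin Ex G x -> Lhat_block i r j = 0.
Proof.
move=> act jE; rewrite Lhat_blockE act /PTxperp mul_mx_diag !mxE jE.
by rewrite mul1r mulr1 subrr.
Qed.

Lemma LhatTLhat_mulmx_notin_Ex (u : 'cV[R]_n) j : j \notin Ex G x ->
  ((Lhat G w x)^T *m Lhat G w x *m u) j 0
    = (\sum_i (~~ active G x i)%:R * w i ^+ 2 * (j \in G i)%:R) * u j 0.
Proof.
move=> jE; rewrite -(submxcolK (Lhat G w x)) tr_mxcol mul_mxrow_mxcol.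
rewrite mulmx_suml summxE mulr_suml; apply: eq_bigr => i _; rewrite -mulmxA -/(Lhat_block i).
have [act|inact] := boolP (active G x i).
  rewrite !mul0r mxE big1 // => r _.
  by rewrite mxE Lhat_block_active_notin_Ex // mul0r.
have trZ : (w i *: Sel R G i)^T = w i *: (Sel R G i)^T.
  by apply/matrixP => a b; rewrite !mxE.
rewrite Lhat_block_inactive // trZ -!scalemxAl -scalemxAr 2!mxE.
by rewrite (@trSel_Sel_mulmxE R n N G i u j) /= mul1r expr2 !mulrA.
Qed.

Lemma vnorm_blockv_umin_inactive m (A : 'M[R]_(m, n)) y lam t :
  (forall i, 0 < w i) -> (Lhat G w x)^T *m Lhat G w x \in unitmx -> ~~ active G x t ->
  vnorm (blockv G (umin G w A y lam x) t) <= vnorm (subv G (beta A y lam x) t) / w t.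
Proof.
move=> w_gt0 LtL_unit inact; have wt_gt0 := w_gt0 t.
set D := _ *m _ in LtL_unit; set b := beta A y lam x; set u := invmx D *m b.
have -> : blockv G (umin G w A y lam x) t = w t *: (Sel R G t *m u).
  rewrite /umin -/D -/b -mulmxA -/u /blockv -submxcol_mul -/(Lhat_block t).
  by rewrite Lhat_block_inactive // scalemxAl.
rewrite mulrC -[(w t)^-1]ger0_norm ?invr_ge0 ?(ltW wt_gt0) // -vnormZ.
apply: ler_vnorm => r; rewrite mxE [in X in _ <= X]mxE !Sel_mulmxE.
set j := enum_val r.
have jE : j \notin Ex G x.
  by rewrite inE negb_forall; apply/existsP; exists t; rewrite inact negbK enum_valP.
have wt2_le : w t ^+ 2 <= \sum_i (~~ active G x i)%:R * w i ^+ 2 * (j \in G i)%:R.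
  rewrite (bigD1 t) //= inact enum_valP mul1r mulr1 lerDl sumr_ge0 // => i _.
  by apply: mulr_ge0; [apply: mulr_ge0; [exact: ler0n | exact: sqr_ge0] | exact: ler0n].
have := LhatTLhat_mulmx_notin_Ex u jE; rewrite mulKVmx // -/b => ->.
set d := \sum_i _ in wt2_le; have d_gt0 : 0 < d by apply: lt_le_trans wt2_le; rewrite exprn_gt0.
have wt_inv_ge0 : 0 <= (w t)^-1 by rewrite invr_ge0 ltW.
rewrite !normrM mulrA (ger0_norm (ltW wt_gt0)) (ger0_norm wt_inv_ge0).
rewrite (ger0_norm (ltW d_gt0)) ler_wpM2r //.
by rewrite ler_pdivlMl // -expr2.
Qed.

End EffectiveLifting.

Theorem proposition3p7 (R : realType) (n N m : nat)
  (G : 'I_N -> {set 'I_n}) (w : 'I_N -> R)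
  (A : 'M[R]_(m, n)) (y : 'cV[R]_m) (lam : R) (xstar : 'cV[R]_n) :
  (forall i, G i != set0) ->
  \bigcup_(i < N) G i = [set: 'I_n] ->
  (forall i, 0 < w i) ->
  0 < lam ->
  (forall x : 'cV[R]_n, objective G w A y lam xstar <= objective G w A y lam x) ->
  (Lhat G w xstar)^T *m Lhat G w xstar \in unitmx ->
  forall t : 'I_N,
    vnorm (blockv G (udag G w A y lam xstar) t)
      <= vnorm (subv G (beta A y lam xstar) t) / w t.
Proof.
(* The groups need neither be nonempty nor cover {1..n} for this bound. *)
move=> _ _ w_gt0 lam_gt0 xstar_opt LtL_unit t.
have [act|inact] := boolP (active G xstar t); last first.
  by rewrite /udag /blockv mxcolK (negbTE inact); exact: vnorm_blockv_umin_inactive.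
rewrite /udag /blockv mxcolK act vnormZV // ler_pdivlMr // mul1r.
exact: w_le_vnorm_beta_active.
Qed.
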